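(* Fix a metric space $M$ and a point $s\in M$, and consider algorithms with all servers starting at $s$. Suppose there is a constant $\rho$ such that for every $h\in\mathbb{N}$ there exists $k=k(h)$ for which the $(h,k)$-server problem on $M$ (all online and offline servers starting at $s$) admits a strictly $\rho$-competitive online algorithm. Then there exists a strictly $\rho$-competitive online algorithm for the infinite server problem on $(M,s)$.
   Context: Infinite server problem on $(M,s)$: $M$ is a metric space with metric $d$ and $s\in M$ is the source. An unbounded number of servers initially reside at $s$. A finite sequence of requests (points of $M$) is revealed one by one; each must be served immediately, without knowledge of future requests, by moving some server to the requested point. The cost is the total distance traveled by the servers. The $(h,k)$-server problem on $M$ ($k\ge h$) is defined similarly except that the online algorithm has $k$ servers and is compared against an optimal offline algorithm with $h$ servers. All online algorithms are deterministic. An online algorithm $ALG$ is strictly $\rho$-competitive if $ALG(\sigma)\le \rho\, OPT(\sigma)$ for every request sequence $\sigma$, where $OPT(\sigma)$ is the optimal offline cost (with $h$ servers in the $(h,k)$ case, with unboundedly many servers in the infinite server case). *)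

From mathcomp Require Import all_boot all_order all_algebra.
From mathcomp Require Import classical_sets reals.
Set Implicit Arguments. Unset Strict Implicit. Unset Printing Implicit Defensive.
Import Order.TTheory GRing.Theory Num.Theory.
Local Open Scope ring_scope.
Local Open Scope classical_set_scope.

Section Servers.
Variables (R : realType) (T : Type) (d : T -> T -> R) (s : T).

Definition is_metric : Prop :=
  [/\ forall x y, 0 <= d x y,
      forall x y, d x y = 0 <-> x = y,
      forall x y, d x y = d y x &
      forall x y z, d x z <= d x y + d y z].

(* A configuration is a finite list L; server i (i : nat) is at [nth s L i].
   Servers beyond [size L] are at the source s.  A server bound
   [Some k] means only servers 0..k-1 exist; [None] means unboundedly
   many servers (infinite server problem). *)
Definition server_ok (kb : option nat) (i : nat) : bool :=
  if kb is Some k then (i < k)%N else true.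

Definition config_ok (kb : option nat) (L : seq T) : bool :=
  if kb is Some k then (size L <= k)%N else true.

Definition serves (kb : option nat) (L : seq T) (r : T) : Prop :=
  exists i, server_ok kb i /\ nth s L i = r.

Definition move_cost (L L' : seq T) : R :=
  \sum_(i < maxn (size L) (size L')) d (nth s L i) (nth s L' i).

Definition path_cost (cfg : nat -> seq T) (n : nat) : R :=
  \sum_(j < n) move_cost (cfg j) (cfg j.+1).

(* Deterministic online algorithm: maps the requests revealed so far
   (including the current one) to the configuration after serving them. *)
Definition online_alg := seq T -> seq T.

Definition online_valid (kb : option nat) (alg : online_alg) : Prop :=
  forall (sigma : seq T) (r : T),
    config_ok kb (alg (rcons sigma r)) /\ serves kb (alg (rcons sigma r)) r.

Definition alg_cfg (alg : online_alg) (sigma : seq T) (j : nat) : seq T :=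
  if j is 0 then [::] else alg (take j sigma).

Definition alg_cost (alg : online_alg) (sigma : seq T) : R :=
  path_cost (alg_cfg alg sigma) (size sigma).

(* Offline schedule: S`_j is the configuration after serving request j. *)
Definition sched_cfg (S : seq (seq T)) (j : nat) : seq T :=
  if j is j'.+1 then nth [::] S j' else [::].

Definition offline_valid (hb : option nat) (sigma : seq T) (S : seq (seq T)) : Prop :=
  size S = size sigma /\
  forall j, (j < size sigma)%N ->
    config_ok hb (nth [::] S j) /\ serves hb (nth [::] S j) (nth s sigma j).

Definition opt (hb : option nat) (sigma : seq T) : R :=
  inf [set c | exists S, offline_valid hb sigma S /\
                          c = path_cost (sched_cfg S) (size sigma)].

Definition strictly_competitive (kb hb : option nat) (rho : R) (alg : online_alg) : Prop :=
  online_valid kb alg /\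
  forall sigma : seq T, alg_cost alg sigma <= rho * opt hb sigma.

End Servers.

From mathcomp Require Import all_boot all_order all_algebra.
From mathcomp Require Import classical_sets reals.
From mathcomp Require Import boolp.
Import Order.TTheory GRing.Theory Num.Theory.
Local Open Scope ring_scope.
Local Open Scope classical_set_scope.
Set Implicit Arguments. Unset Strict Implicit. Unset Printing Implicit Defensive.

(* Only which server serves each request matters: moving just the serving
   server, straight from the last request it served, is never more expensive
   (triangle inequality).  Renaming the servers of the algorithm for h = n + 1
   in order of first use, request t gets a label at most t, so by a König-type
   compactness argument there is a single prefix-consistent labelling that
   agrees, on each request sequence, with the renamed labelling of infinitely
   many of these algorithms.  Its lazy realisation uses unboundedly many
   servers and costs at most rho * OPT_(n+1) for infinitely many n, while
   OPT_h is at most the cost of any given offline schedule as soon as h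
   exceeds the number of servers that schedule uses. *)

Section LazyServing.
Variables (R : realType) (T : Type) (d : T -> T -> R) (s : T).
Hypothesis d_metric : is_metric d.

Lemma metric_ge0 x y : 0 <= d x y. Proof. by case: d_metric. Qed.
Lemma metric_xx x : d x x = 0. Proof. by case: d_metric => _ dP _ _; apply/dP. Qed.
Lemma metric_triangle x y z : d x z <= d x y + d y z. Proof. by case: d_metric. Qed.

Definition labels_bounded (lab : seq nat) (n : nat) : Prop :=
  forall t, (t < n)%N -> (nth 0%N lab t <= t)%N.

(* Position of server [l] after the first [j] requests, when request [t] is
   served by server [lab`_t] and servers move only to serve. *)
Fixpoint lazy_pos (lab : seq nat) (sg : seq T) (j l : nat) : T :=
  if j is j'.+1 then
    if nth 0%N lab j' == l then nth s sg j' else lazy_pos lab sg j' l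
  else s.

Definition lazy_cfg (lab : seq nat) (sg : seq T) (j : nat) : seq T :=
  mkseq (lazy_pos lab sg j) j.

Definition lazy_cost (lab : seq nat) (sg : seq T) (n : nat) : R :=
  \sum_(j < n) d (lazy_pos lab sg j (nth 0%N lab j)) (nth s sg j).

Lemma labels_boundedW lab m n :
  (m <= n)%N -> labels_bounded lab n -> labels_bounded lab m.
Proof. by move=> le_mn lab_n t lt_tm; apply/lab_n/(leq_trans lt_tm). Qed.

Lemma lazy_pos_idle lab sg j l :
  labels_bounded lab j -> (j <= l)%N -> lazy_pos lab sg j l = s.
Proof.
elim: j => [//|j IH] lab_j lt_jl /=.
rewrite ltn_eqF; last exact: leq_ltn_trans (lab_j j (ltnSn j)) lt_jl.
by apply: IH (ltnW lt_jl); apply: labels_boundedW lab_j.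
Qed.

Lemma nth_lazy_cfg lab sg j l :
  labels_bounded lab j -> nth s (lazy_cfg lab sg j) l = lazy_pos lab sg j l.
Proof.
move=> lab_j; have [lt_lj|le_jl] := ltnP l j; first by rewrite nth_mkseq.
by rewrite nth_default ?size_mkseq // lazy_pos_idle.
Qed.

Lemma move_cost_lazy_cfg lab sg j : labels_bounded lab j.+1 ->
  move_cost d s (lazy_cfg lab sg j) (lazy_cfg lab sg j.+1)
  = d (lazy_pos lab sg j (nth 0%N lab j)) (nth s sg j).
Proof.
move=> lab_j1; have lab_j := labels_boundedW (leqnSn j) lab_j1.
rewrite /move_cost !size_mkseq (maxn_idPr (leqnSn j)).
have lt_lab_j : (nth 0%N lab j < j.+1)%N by rewrite ltnS lab_j1.
rewrite (bigD1 (Ordinal lt_lab_j)) //= !nth_lazy_cfg //= eqxx big1 ?addr0 // => i ni.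
rewrite !nth_lazy_cfg //= ifN ?metric_xx //.
by apply: contra_neq ni => eq_i; apply: val_inj.
Qed.

Lemma lazy_pos_take lab sg n j l :
  (j <= n)%N -> lazy_pos (take n lab) (take n sg) j l = lazy_pos lab sg j l.
Proof. by elim: j => [//|j IH] le_jn /=; rewrite !nth_take // IH // ltnW. Qed.

Lemma lazy_cost_relabel lab lab' sg n :
  (forall a b, (a < n)%N -> (b < n)%N ->
     (nth 0%N lab a == nth 0%N lab b) = (nth 0%N lab' a == nth 0%N lab' b)) ->
  lazy_cost lab sg n = lazy_cost lab' sg n.
Proof.
move=> same_pattern.
have relabel j t : (j <= n)%N -> (t < n)%N ->
    lazy_pos lab sg j (nth 0%N lab t) = lazy_pos lab' sg j (nth 0%N lab' t).
  elim: j => [//|j IH] le_jn lt_tn /=.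
  by rewrite same_pattern ?IH // ltnW.
by apply: eq_bigr => j _; rewrite relabel // ltnW.
Qed.

Lemma move_cost_widen L L' K : (size L <= K)%N -> (size L' <= K)%N ->
  move_cost d s L L' = \sum_(i < K) d (nth s L i) (nth s L' i).
Proof.
move=> le_LK le_L'K; rewrite /move_cost.
rewrite (big_ord_widen K (fun i => d (nth s L i) (nth s L' i))) ?geq_max ?le_LK //.
rewrite big_mkcond /=; apply: eq_bigr => i _; case: ifPn => //.
by rewrite -leqNgt geq_max => /andP [? ?]; rewrite !nth_default // metric_xx.
Qed.

Lemma lazy_cost_le (C : nat -> seq T) lab sg K n :
  C 0%N = [::] ->
  (forall j, (j <= n)%N -> (size (C j) <= K)%N) ->
  (forall j, (j < n)%N ->
     (nth 0%N lab j < K)%N /\ nth s (C j.+1) (nth 0%N lab j) = nth s sg j) ->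
  lazy_cost lab sg n <= path_cost d s C n.
Proof.
move=> C0 size_C serve_C.
(* Potential: the distance from the lazy servers to those of [C] pays for the
   detours of [C]. *)
suff potential m : (m <= n)%N ->
    lazy_cost lab sg m + \sum_(i < K) d (lazy_pos lab sg m i) (nth s (C m) i)
    <= path_cost d s C m.
  apply: le_trans (potential n (leqnn n)).
  by rewrite lerDl sumr_ge0 // => i _; apply: metric_ge0.
elim: m => [_|m IH lt_mn].
  rewrite /lazy_cost /path_cost !big_ord0 add0r big1 // => i _.
  by rewrite C0 nth_nil metric_xx.
have [lt_lab_K serve_m] := serve_C m lt_mn.
rewrite /lazy_cost /path_cost in IH *; rewrite !big_ord_recr /=.
apply: le_trans (lerD (IH (ltnW lt_mn)) (lexx _)).
rewrite -!addrA lerD2l (move_cost_widen (K := K)) ?size_C ?(ltnW lt_mn) //.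
have -> : d (lazy_pos lab sg m (nth 0%N lab m)) (nth s sg m) =
    \sum_(i < K) (if nth 0%N lab m == i
                  then d (lazy_pos lab sg m i) (nth s (C m.+1) i) else 0).
  rewrite (bigD1 (Ordinal lt_lab_K)) //= eqxx serve_m big1 ?addr0 // => i ni.
  by rewrite ifN //; apply: contra_neq ni => eq_i; apply: val_inj.
rewrite -!big_split; apply: ler_sum => i _ /=.
case: eqP => [<-|_]; last by rewrite add0r metric_triangle.
by rewrite serve_m metric_xx addr0 -serve_m metric_triangle.
Qed.

Definition lazy_alg (F : seq T -> seq nat) : online_alg T :=
  fun sg => lazy_cfg (F sg) sg (size sg).

Lemma lazy_alg_valid F :
  (forall sg, labels_bounded (F sg) (size sg)) -> online_valid s None (lazy_alg F).
Proof.
move=> F_bounded sg r; split => //; exists (nth 0%N (F (rcons sg r)) (size sg)).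
by rewrite /lazy_alg nth_lazy_cfg // size_rcons /= eqxx nth_rcons ltnn eqxx.
Qed.

Lemma alg_cost_lazy_alg F sg :
  (forall j, F (take j sg) = take j (F sg)) -> labels_bounded (F sg) (size sg) ->
  alg_cost d s (lazy_alg F) sg = lazy_cost (F sg) sg (size sg).
Proof.
move=> F_take F_bounded.
have cfg j : (j <= size sg)%N -> alg_cfg (lazy_alg F) sg j = lazy_cfg (F sg) sg j.
  case: j => [//|j] le_j /=; rewrite /lazy_alg size_takel // F_take.
  by apply: eq_mkseq => l; rewrite lazy_pos_take.
apply: eq_bigr => j _; rewrite !cfg ?(ltnW (ltn_ord j)) ?ltn_ord // move_cost_lazy_cfg //.
exact: labels_boundedW F_bounded.
Qed.

End LazyServing.

Definition infinitely_often (P : nat -> Prop) : Prop :=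
  forall N, exists2 n, (N <= n)%N & P n.

Lemma infinitely_often_pigeonhole (P : nat -> Prop) (g : nat -> nat) m :
  infinitely_often P -> (forall n, P n -> (g n < m)%N) ->
  exists l, infinitely_often (fun n => P n /\ g n = l).
Proof.
elim: m P => [|m IH] P often_P g_lt; first by have [n _ /g_lt] := often_P 0%N.
have [|not_often_m] := pselect (infinitely_often (fun n => P n /\ g n = m)).
  by exists m.
have [N0 not_m] : exists N0, forall n, (N0 <= n)%N -> ~ (P n /\ g n = m).
  apply: contrapT => /forallNP no_N0; apply: not_often_m => N.
  by apply: contrapT => /forallPNP; apply: no_N0.
have [|n P_n|l often_l] := IH (fun n => P n /\ (N0 <= n)%N).
- move=> N; have [n le_n P_n] := often_P (maxn N N0).
  by exists n; [|split]; move: le_n; rewrite geq_max => /andP [].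
- case: P_n => P_n le_N0n; have := g_lt n P_n.
  by rewrite ltnS leq_eqVlt => /orP [/eqP g_m|//]; case: (not_m n le_N0n).
- by exists l => N; have [n le_n [[P_n _] g_l]] := often_l N; exists n.
Qed.

Section LimitLabelling.
Variables (T : Type) (lab : nat -> seq T -> seq nat).
Hypothesis lab_nil : forall n, lab n [::] = [::].
Hypothesis lab_rcons : forall n sg r,
  exists2 l, (l <= size sg)%N & lab n (rcons sg r) = rcons (lab n sg) l.

Lemma lab_shape n sg : size (lab n sg) = size sg /\ labels_bounded (lab n sg) (size sg).
Proof.
elim/last_ind: sg => [|sg r [size_sg bounded_sg]]; first by rewrite lab_nil.
have [l le_l ->] := lab_rcons n sg r; rewrite !size_rcons size_sg; split => // t.
rewrite ltnS leq_eqVlt nth_rcons size_sg => /orP [/eqP ->|lt_t]; last first.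
  by rewrite lt_t bounded_sg.
by rewrite ltnn eqxx.
Qed.

Definition limit_next (sg : seq T) (acc : seq nat) : nat :=
  xget 0%N [set l | infinitely_often (fun n => lab n sg = rcons acc l)].

(* Recursion on the reversed sequence, so that the label of the last request
   is chosen knowing the labels of its prefix. *)
Fixpoint limit_rev (rs : seq T) : seq nat :=
  if rs is _ :: rs' then rcons (limit_rev rs') (limit_next (rev rs) (limit_rev rs'))
  else [::].

Definition limit_lab (sg : seq T) : seq nat := limit_rev (rev sg).

Lemma limit_lab_rcons sg r :
  limit_lab (rcons sg r) = rcons (limit_lab sg) (limit_next (rcons sg r) (limit_lab sg)).
Proof. by rewrite /limit_lab rev_rcons /= rev_cons revK. Qed.

Lemma limit_lab_often sg : infinitely_often (fun n => lab n sg = limit_lab sg).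
Proof.
elim/last_ind: sg => [|sg r often_sg]; first by move=> N; exists N; rewrite ?lab_nil.
have [n _|l often_l] := infinitely_often_pigeonhole
  (g := fun n => last 0%N (lab n (rcons sg r))) (m := (size sg).+1) often_sg.
  by have [l le_l ->] := lab_rcons n sg r; rewrite last_rcons ltnS.
have : exists l, infinitely_often (fun n => lab n (rcons sg r) = rcons (limit_lab sg) l).
  exists l => N; have [n le_n [lab_n last_l]] := often_l N; exists n => //.
  by move: last_l; have [l' _ ->] := lab_rcons n sg r; rewrite last_rcons lab_n => ->.
by move=> /(xgetPex 0%N); rewrite limit_lab_rcons.
Qed.

Lemma limit_lab_shape sg :
  size (limit_lab sg) = size sg /\ labels_bounded (limit_lab sg) (size sg).
Proof. by have [n _ <-] := limit_lab_often sg 0%N; apply: lab_shape. Qed.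

Lemma limit_lab_take sg j : limit_lab (take j sg) = take j (limit_lab sg).
Proof.
elim/last_ind: sg j => [//|sg r IH] j.
have [le_j|lt_j] := leqP j (size sg); last first.
  by rewrite !take_oversize //; rewrite ?(limit_lab_shape _).1 size_rcons.
by rewrite limit_lab_rcons -!cats1 !takel_cat ?(limit_lab_shape _).1 ?IH.
Qed.

End LimitLabelling.

Section Offline.
Variables (R : realType) (T : Type) (d : T -> T -> R) (s : T).
Hypothesis d_metric : is_metric d.

Definition offline_costs (hb : option nat) (sg : seq T) : set R :=
  [set c | exists S, offline_valid s hb sg S /\ c = path_cost d s (sched_cfg S) (size sg)].

Lemma offline_costs_ge0 hb sg : lbound (offline_costs hb sg) 0.
Proof.
move=> _ [S [_ ->]]; apply: sumr_ge0 => j _.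
by apply: sumr_ge0 => i _; apply: metric_ge0.
Qed.

Lemma offline_costs_nonempty hb sg : hb <> Some 0%N -> offline_costs hb sg !=set0.
Proof.
move=> hb_gt0; pose S := [seq [:: r] | r <- sg].
exists (path_cost d s (sched_cfg S) (size sg)), S; split => //.
split=> [|j lt_j]; first by rewrite size_map.
by rewrite (nth_map s) //; split; last exists 0%N; case: hb hb_gt0 => [[]|].
Qed.

Lemma opt_le hb sg c : offline_costs hb sg c -> opt d s hb sg <= c.
Proof. by move=> cost_c; apply: ge_inf => //; exists 0; apply: offline_costs_ge0. Qed.

Lemma opt_ge hb sg x :
  hb <> Some 0%N -> lbound (offline_costs hb sg) x -> x <= opt d s hb sg.
Proof. by move=> hb_gt0 lb_x; apply: lb_le_inf => //; apply: offline_costs_nonempty. Qed.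

Lemma offline_valid_None hb sg S : offline_valid s hb sg S -> offline_valid s None sg S.
Proof.
move=> [size_S valid_S]; split => // j /valid_S [_ [i [_ serve_i]]].
by split => //; exists i.
Qed.

Lemma offline_valid_Some sg S h : offline_valid s None sg S ->
  (\max_(i < size S) size (nth [::] S i) < h)%N -> offline_valid s (Some h) sg S.
Proof.
move=> [size_S valid_S] lt_h; split => // j lt_j.
have le_Sj : (size (nth [::] S j) < h)%N.
  by apply: leq_ltn_trans lt_h; rewrite -size_S in lt_j; apply: (leq_bigmax (Ordinal lt_j)).
have [_ [i [_ serve_i]]] := valid_S j lt_j; split; first exact: ltnW.
(* A server beyond the configuration sits at [s], like server
   [size (nth [::] S j)]. *)
have [lt_i|le_i] := ltnP i (size (nth [::] S j)).
  by exists i; split => //=; apply: ltn_trans le_Sj.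
by exists (size (nth [::] S j)); rewrite /= le_Sj nth_default // -serve_i nth_default.
Qed.

Lemma opt_None_le_Some sg h : (0 < h)%N -> opt d s None sg <= opt d s (Some h) sg.
Proof.
move=> h_gt0; apply: opt_ge; first by case: h h_gt0.
by move=> _ [S [/offline_valid_None valid_S ->]]; apply: opt_le; exists S.
Qed.

Lemma le_rho_opt_None sg rho c :
  infinitely_often (fun n => c <= rho * opt d s (Some n.+1) sg) ->
  c <= rho * opt d s None sg.
Proof.
move=> often.
have [rho_lt0|rho_ge0] := ltrP rho 0.
  have [n _ le_c] := often 0%N; apply: le_trans le_c _.
  by apply: ler_wnM2l; [exact: ltW | exact: opt_None_le_Some].
have le_rho_cost c' : offline_costs None sg c' -> c <= rho * c'.
  move=> [S [valid_S ->]]; have [n le_n le_c] := often (\max_(i < size S) size (nth [::] S i)).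
  apply: le_trans le_c (ler_wpM2l rho_ge0 (opt_le _)).
  by exists S; split => //; apply: offline_valid_Some valid_S _; rewrite ltnS.
have [rho0|rho_neq0] := eqVneq rho 0.
  have [//|c' /le_rho_cost] := @offline_costs_nonempty None sg.
  by rewrite rho0 !mul0r.
have rho_gt0 : 0 < rho by rewrite lt_def rho_neq0.
rewrite -ler_pdivrMl //; apply: opt_ge => // c' /le_rho_cost.
by rewrite ler_pdivrMl.
Qed.

End Offline.

Lemma nth_index_map_eq (U : eqType) (x0 : U) (xs : seq U) a b :
  (a < size xs)%N -> (b < size xs)%N ->
  (nth 0%N [seq index x xs | x <- xs] a == nth 0%N [seq index x xs | x <- xs] b) =
  (nth x0 xs a == nth x0 xs b).
Proof.
by move=> lt_a lt_b; rewrite !(nth_map x0) // (inj_in_eq (@index_inj _ x0 xs)) ?mem_nth.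
Qed.

Section LimitAlgorithm.
Variables (R : realType) (T : Type) (d : T -> T -> R) (s : T) (rho : R).
Hypothesis d_metric : is_metric d.
Variables (k : nat -> nat) (A : nat -> online_alg T).
Hypothesis A_competitive :
  forall n, strictly_competitive d s (Some (k n)) (Some n.+1) rho (A n).

Definition serving_server n (sg : seq T) : nat :=
  xget 0%N [set i | (i < k n)%N /\ nth s (A n sg) i = last s sg].

Definition serving_servers n (sg : seq T) : seq nat :=
  mkseq (fun j => serving_server n (take j.+1 sg)) (size sg).

Definition first_use_labels n (sg : seq T) : seq nat :=
  [seq index i (serving_servers n sg) | i <- serving_servers n sg].

Lemma serving_server_spec n sg r :
  (serving_server n (rcons sg r) < k n)%N /\
  nth s (A n (rcons sg r)) (serving_server n (rcons sg r)) = r.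
Proof.
have [_ [i [lt_ik serve_i]]] := (A_competitive n).1 sg r.
rewrite /serving_server last_rcons.
exact: (@xgetI _ 0%N [set j | (j < k n)%N /\ nth s (A n (rcons sg r)) j = r] i).
Qed.

Lemma size_serving_servers n sg : size (serving_servers n sg) = size sg.
Proof. exact: size_mkseq. Qed.

Lemma serving_servers_rcons n sg r :
  serving_servers n (rcons sg r) =
  rcons (serving_servers n sg) (serving_server n (rcons sg r)).
Proof.
rewrite /serving_servers size_rcons mkseqS take_oversize ?size_rcons //; congr rcons.
apply/eq_in_map => j; rewrite mem_iota add0n => /andP [_ lt_j].
by rewrite -cats1 takel_cat.
Qed.

Lemma first_use_labels_rcons n sg r : exists2 l, (l <= size sg)%N &
  first_use_labels n (rcons sg r) = rcons (first_use_labels n sg) l.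
Proof.
set i := serving_server n (rcons sg r).
exists (index i (rcons (serving_servers n sg) i)).
  by rewrite -ltnS -(size_serving_servers n) -(size_rcons _ i) index_mem mem_rcons mem_head.
rewrite /first_use_labels serving_servers_rcons map_rcons; congr rcons.
by apply/eq_in_map => x x_in; rewrite -cats1 index_cat x_in.
Qed.

Lemma lazy_cost_first_use_le n sg :
  lazy_cost d s (first_use_labels n sg) sg (size sg) <= alg_cost d s (A n) sg.
Proof.
rewrite (@lazy_cost_relabel _ _ d s _ (serving_servers n sg)); last first.
  by move=> a b; rewrite -(size_serving_servers n); apply: nth_index_map_eq.
apply: (lazy_cost_le d_metric (K := k n)) => // [[|j] le_j|j lt_j] /=.
- exact: leq0n.
- by rewrite (take_nth s) //; have [/(_ (take j sg) (nth s sg j)) []] := A_competitive n.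
- by rewrite /serving_servers nth_mkseq // (take_nth s) //; apply: serving_server_spec.
Qed.

Theorem lazy_limit_competitive :
  strictly_competitive d s None None rho (lazy_alg s (limit_lab first_use_labels)).
Proof.
have lab_nil n : first_use_labels n [::] = [::] by [].
have shape := limit_lab_shape lab_nil first_use_labels_rcons.
split; first by apply: lazy_alg_valid => sg; have [] := shape sg.
move=> sg; rewrite alg_cost_lazy_alg //; last 2 first.
- exact: limit_lab_take lab_nil first_use_labels_rcons sg.
- by have [] := shape sg.
apply: le_rho_opt_None => // N.
have [n le_n <-] := limit_lab_often lab_nil first_use_labels_rcons sg N.
by exists n => //; apply: le_trans (lazy_cost_first_use_le n sg) ((A_competitive n).2 sg).
Qed.

End LimitAlgorithm.

Theorem theorem2 (R : realType) (T : Type) (d : T -> T -> R) (s : T) (rho : R) :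
  is_metric d ->
  (forall h : nat, (0 < h)%N ->
     exists k : nat, (h <= k)%N /\
       exists alg : online_alg T,
         strictly_competitive d s (Some k) (Some h) rho alg) ->
  exists alg : online_alg T, strictly_competitive d s None None rho alg.
Proof.
move=> d_metric competitive.
have /choice [kA kA_competitive] : forall n, exists kA : nat * online_alg T,
    strictly_competitive d s (Some kA.1) (Some n.+1) rho kA.2.
  by move=> n; have [k [_ [A A_competitive]]] := competitive n.+1 isT; exists (k, A).
exists (lazy_alg s (limit_lab (first_use_labels s (fun n => (kA n).1) (fun n => (kA n).2)))).
exact: lazy_limit_competitive.
Qed.
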